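(* (Provably in $\mathsf{Z}^-_{\mathrm{FTM}\omega}$.) For any set $X$, the finite closure $\mathrm{PC}(X)$ and the transitive closure $\mathrm{TC}(X)$ exist as sets.
   Context: $\mathsf{Z}^-_{\mathrm{FTM}\omega}$ is Zermelo set theory without Power Set and Choice (Extensionality, Pairing, Union, Infinity, Regularity, Separation) plus: (FC) every set $X$ has a superset $Y$ such that every finite $x\subseteq Y$ belongs to $Y$; (TS) every set has a transitive superset; (MC) every set binary relation $A$ that is well-founded and extensional admits a transitive set $X$ and a bijection $\eta$ from its field onto $X$ with $jAk\iff\eta(j)\in\eta(k)$; (Count) every set admits an injection into $\omega$. A set $Y$ is finite-subset closed if every finite $x\subseteq Y$ belongs to $Y$. $\mathrm{PC}(X)$ is the $\subseteq$-least finite-subset closed superset of $X$, and $\mathrm{TC}(X)$ is the $\subseteq$-least transitive superset of $X$. *)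

(* Models of the first-order theory Z^-_{FTM omega} in the
   language {∈}: a carrier M with a membership relation mem; equality is
   Leibniz equality on M.  "Provable in T" is rendered (via completeness)
   as "true in every model of T".  The Separation schema is stated for all
   first-order formulas (deeply embedded, de Bruijn indices, with parameters). *)

Set Implicit Arguments.

Section ZSets.
Variable M : Type.
Variable mem : M -> M -> Prop.

Inductive form : Type :=
| FIn  : nat -> nat -> form
| FEq  : nat -> nat -> form
| FBot : form
| FImp : form -> form -> form
| FAnd : form -> form -> form
| FOr  : form -> form -> form
| FAll : form -> form
| FEx  : form -> form.

Definition scons (x : M) (e : nat -> M) : nat -> M :=
  fun n => match n with 0 => x | S k => e k end.

Fixpoint sat (e : nat -> M) (f : form) : Prop :=
  match f with
  | FIn i j => mem (e i) (e j)
  | FEq i j => e i = e j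
  | FBot => False
  | FImp a b => sat e a -> sat e b
  | FAnd a b => sat e a /\ sat e b
  | FOr a b => sat e a \/ sat e b
  | FAll a => forall x, sat (scons x e) a
  | FEx a => exists x, sat (scons x e) a
  end.

Definition subset (a b : M) : Prop := forall x, mem x a -> mem x b.
Definition is_empty (a : M) : Prop := forall x, ~ mem x a.
Definition transitive (a : M) : Prop := forall x y, mem y x -> mem x a -> mem y a.
Definition is_upair (p x y : M) : Prop := forall z, mem z p <-> (z = x \/ z = y).
Definition is_pair (p x y : M) : Prop :=
  forall z, mem z p <-> (is_upair z x x \/ is_upair z x y).
Definition is_succ (s x : M) : Prop := forall z, mem z s <-> (mem z x \/ z = x).
Definition inductive (a : M) : Prop :=
  (exists e, is_empty e /\ mem e a) /\
  (forall x, mem x a -> exists s, is_succ s x /\ mem s a).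
Definition is_omega (w : M) : Prop :=
  inductive w /\ forall I, inductive I -> subset w I.

Definition rel (f a b : M) : Prop := exists p, mem p f /\ is_pair p a b.

Definition is_fun_on (f : M) (D B : M -> Prop) : Prop :=
  (forall p, mem p f -> exists a b, is_pair p a b /\ D a /\ B b) /\
  (forall a, D a -> exists b, rel f a b) /\
  (forall a b b', rel f a b -> rel f a b' -> b = b').
Definition injective_fun (f : M) : Prop :=
  forall a a' b, rel f a b -> rel f a' b -> a = a'.
Definition bijection_on (f : M) (D B : M -> Prop) : Prop :=
  is_fun_on f D B /\ injective_fun f /\ (forall b, B b -> exists a, D a /\ rel f a b).

Definition finite (x : M) : Prop :=
  exists w n f, is_omega w /\ mem n w /\ bijection_on f (fun a => mem a x) (fun b => mem b n).

Definition fs_closed (Y : M) : Prop :=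
  forall x, subset x Y -> finite x -> mem x Y.

Definition is_relation (A : M) : Prop := forall p, mem p A -> exists a b, is_pair p a b.
Definition field (A : M) (j : M) : Prop := exists k, rel A j k \/ rel A k j.
Definition well_founded_rel (A : M) : Prop :=
  forall s, (exists x, mem x s) -> (forall x, mem x s -> field A x) ->
    exists m, mem m s /\ forall y, mem y s -> ~ rel A y m.
Definition extensional_rel (A : M) : Prop :=
  forall j k, field A j -> field A k -> (forall i, rel A i j <-> rel A i k) -> j = k.

Record ZFTMw : Prop := {
  ax_ext : forall a b, (forall z, mem z a <-> mem z b) -> a = b;
  ax_pair : forall x y, exists p, is_upair p x y;
  ax_union : forall a, exists u, forall z, mem z u <-> exists y, mem y a /\ mem z y;
  ax_inf : exists I, inductive I;
  ax_reg : forall a, (exists x, mem x a) -> exists y, mem y a /\ forall z, mem z y -> ~ mem z a;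
  ax_sep : forall (phi : form) (e : nat -> M) (a : M),
      exists b, forall x, mem x b <-> (mem x a /\ sat (scons x e) phi);
  ax_FC : forall X, exists Y, subset X Y /\ fs_closed Y;
  ax_TS : forall X, exists Y, subset X Y /\ transitive Y;
  ax_MC : forall A, is_relation A -> well_founded_rel A -> extensional_rel A ->
      exists X eta, transitive X /\ bijection_on eta (field A) (fun b => mem b X) /\
        forall j k a b, field A j -> field A k -> rel eta j a -> rel eta k b ->
          (rel A j k <-> mem a b);
  ax_Count : forall X, exists w f, is_omega w /\
      is_fun_on f (fun a => mem a X) (fun b => mem b w) /\ injective_fun f
}.

Definition is_PC (X P : M) : Prop :=
  subset X P /\ fs_closed P /\ forall Y, subset X Y -> fs_closed Y -> subset P Y.
Definition is_TC (X T : M) : Prop :=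
  subset X T /\ transitive T /\ forall Y, subset X Y -> transitive Y -> subset T Y.

End ZSets.

(* Both closures are cut out by Separation from a superset supplied by an
   axiom: PC(X) is the set of those y in a finite-subset-closed superset of
   X (given by FC) that lie in every finite-subset-closed superset of X, and
   TC(X) is obtained likewise from a transitive superset (given by TS).  This
   works because both closure conditions are first order and are preserved
   under intersections. *)


Set Implicit Arguments.

Definition FIff (a b : form) : form := FAnd (FImp a b) (FImp b a).

(* In [f_xxx i j ...] the arguments are de Bruijn indices of the free
   variables; they are shifted by [S] under each quantifier. *)
Definition f_upair p x y :=
  FAll (FIff (FIn 0 (S p)) (FOr (FEq 0 (S x)) (FEq 0 (S y)))).
Definition f_pair p x y :=
  FAll (FIff (FIn 0 (S p)) (FOr (f_upair 0 (S x) (S x)) (f_upair 0 (S x) (S y)))).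
Definition f_rel f a b := FEx (FAnd (FIn 0 (S f)) (f_pair 0 (S a) (S b))).
Definition f_empty a := FAll (FImp (FIn 0 (S a)) FBot).
Definition f_succ s x := FAll (FIff (FIn 0 (S s)) (FOr (FIn 0 (S x)) (FEq 0 (S x)))).
Definition f_inductive a :=
  FAnd (FEx (FAnd (f_empty 0) (FIn 0 (S a))))
       (FAll (FImp (FIn 0 (S a)) (FEx (FAnd (f_succ 0 1) (FIn 0 (S (S a))))))).
Definition f_subset a b := FAll (FImp (FIn 0 (S a)) (FIn 0 (S b))).
Definition f_omega w := FAnd (f_inductive w) (FAll (FImp (f_inductive 0) (f_subset (S w) 0))).
Definition f_fun_on f x n :=
  FAnd (FAll (FImp (FIn 0 (S f)) (FEx (FEx (FAnd (f_pair 2 1 0)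
          (FAnd (FIn 1 (S (S (S x)))) (FIn 0 (S (S (S n))))))))))
  (FAnd (FAll (FImp (FIn 0 (S x)) (FEx (f_rel (S (S f)) 1 0))))
        (FAll (FAll (FAll (FImp (f_rel (3 + f) 2 1) (FImp (f_rel (3 + f) 2 0) (FEq 1 0))))))).
Definition f_injective f :=
  FAll (FAll (FAll (FImp (f_rel (3 + f) 2 0) (FImp (f_rel (3 + f) 1 0) (FEq 2 1))))).
Definition f_bijection_on f x n :=
  FAnd (f_fun_on f x n) (FAnd (f_injective f)
    (FAll (FImp (FIn 0 (S n)) (FEx (FAnd (FIn 0 (S (S x))) (f_rel (S (S f)) 0 1)))))).
Definition f_finite x :=
  FEx (FEx (FEx (FAnd (f_omega 2) (FAnd (FIn 1 2) (f_bijection_on 0 (3 + x) 1))))).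
Definition f_fs_closed Y := FAll (FImp (f_subset 0 (S Y)) (FImp (f_finite 0) (FIn 0 (S Y)))).
Definition f_transitive a :=
  FAll (FAll (FImp (FIn 0 1) (FImp (FIn 1 (S (S a))) (FIn 0 (S (S a)))))).

Section LeastSuperset.

Variable M : Type.
Variable mem : M -> M -> Prop.

Definition definable (C : M -> Prop) : Prop :=
  exists phi, forall e Z, sat mem (scons Z e) phi <-> C Z.

Definition closed_under_meets (C : M -> Prop) : Prop :=
  forall (F : M -> Prop) (Y P : M), C Y -> (forall Z, F Z -> C Z) ->
    (forall x, mem x P <-> mem x Y /\ forall Z, F Z -> mem x Z) -> C P.

Lemma fs_closed_definable : definable (fs_closed mem).
Proof. exists (f_fs_closed 0); intros e Z; apply iff_refl. Qed.

Lemma transitive_definable : definable (transitive mem).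
Proof. exists (f_transitive 0); intros e Z; apply iff_refl. Qed.

Lemma fs_closed_closed_under_meets : closed_under_meets (fs_closed mem).
Proof.
  intros F Y P HY HF HP x Hsub Hfin.
  apply HP; split.
  - apply HY; [intros z Hz; exact (proj1 (proj1 (HP z) (Hsub z Hz))) | exact Hfin].
  - intros Z HZ; apply (HF Z HZ); [|exact Hfin].
    intros z Hz; exact (proj2 (proj1 (HP z) (Hsub z Hz)) Z HZ).
Qed.

Lemma transitive_closed_under_meets : closed_under_meets (transitive mem).
Proof.
  intros F Y P HY HF HP x y Hyx HxP.
  destruct (proj1 (HP x) HxP) as [HxY HxF].
  apply HP; split.
  - exact (HY x y Hyx HxY).
  - intros Z HZ; exact (HF Z HZ x y Hyx (HxF Z HZ)).
Qed.

Hypothesis separation : forall (phi : form) (e : nat -> M) (a : M),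
  exists b, forall x, mem x b <-> (mem x a /\ sat mem (scons x e) phi).

Lemma least_superset_exists (C : M -> Prop) (X : M) :
  definable C -> closed_under_meets C -> (exists Y, subset mem X Y /\ C Y) ->
  exists P, subset mem X P /\ C P /\
    forall Y, subset mem X Y -> C Y -> subset mem P Y.
Proof.
  intros [phi Hphi] Hmeet [Y [HXY HY]].
  (* By [Hphi], [phi] ignores all variables but 0, so it needs no lifting. *)
  destruct (separation (FAll (FImp (f_subset 2 0) (FImp phi (FIn 1 0)))) (fun _ => X) Y)
    as [P HP].
  assert (HP' : forall x, mem x P <-> mem x Y /\
            forall Z, subset mem X Z /\ C Z -> mem x Z).
  { intro x; split.
    - intro Hx; destruct (proj1 (HP x) Hx) as [HxY HxC]; simpl in HxC.
      split; [exact HxY|]; intros Z [HXZ HZ].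
      apply HxC; [exact HXZ | apply Hphi; exact HZ].
    - intros [HxY HxC]; apply HP; split; [exact HxY|]; simpl.
      intros Z HXZ HZ; apply HxC; split; [exact HXZ | exact (proj1 (Hphi _ Z) HZ)]. }
  exists P; split; [|split].
  - intros x Hx; apply HP'; split; [exact (HXY x Hx) | intros Z [HXZ _]; exact (HXZ x Hx)].
  - apply (Hmeet (fun Z => subset mem X Z /\ C Z) Y P HY); [intros Z [_ HZ]; exact HZ | exact HP'].
  - intros Z HXZ HZ x Hx; exact (proj2 (proj1 (HP' x) Hx) Z (conj HXZ HZ)).
Qed.

End LeastSuperset.

Theorem lemma9p1 (M : Type) (mem : M -> M -> Prop) (HT : ZFTMw mem) :
  forall X : M, (exists P, is_PC mem X P) /\ (exists T, is_TC mem X T).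
Proof.
  intro X; split; apply (least_superset_exists (ax_sep HT)).
  - apply fs_closed_definable.
  - apply fs_closed_closed_under_meets.
  - exact (ax_FC HT X).
  - apply transitive_definable.
  - apply transitive_closed_under_meets.
  - exact (ax_TS HT X).
Qed.
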